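(* Let $m\ge 1$, $0\le\rho<\tfrac12$, and let $P_1\ge P_2\ge\dots\ge P_{2^m}$ be a probability distribution on $2^m$ words $\mathbf{w}_1,\dots,\mathbf{w}_{2^m}\in\{0,1\}^m$. Define $P_k^d=\sum_{j}\rho^{d(k,j)}(1-\rho)^{m-d(k,j)}P_j$, where $d(k,j)$ is the Hamming distance between $\mathbf{w}_k$ and $\mathbf{w}_j$, and assume $P_1^d\ge P_2^d\ge\dots\ge P_{2^m}^d$. Fix $1\le i<2^m$ and let $(N_i^e(t),N_i^d(t))_{t\ge t_0}$ be a Markov chain on $\mathbb{Z}^2$ with i.i.d. steps, where the probability $P^i_{\{x,y\}}$ of moving from $(N_i^e,N_i^d)$ to $(N_i^e+x,N_i^d+y)$, $x,y\in\{-1,0,1\}$, is: $P^i_{\{1,1\}}=(1-\rho)^{m}P_i$; $P^i_{\{-1,-1\}}=(1-\rho)^mP_{i+1}$; $P^i_{\{1,-1\}}=\rho^{d(i,i+1)}(1-\rho)^{m-d(i,i+1)}P_i$; $P^i_{\{-1,1\}}=\rho^{d(i+1,i)}(1-\rho)^{m-d(i+1,i)}P_{i+1}$; $P^i_{\{1,0\}}=\sum_{j\ne i,i+1}\rho^{d(i,j)}(1-\rho)^{m-d(i,j)}P_i$; $P^i_{\{-1,0\}}=\sum_{j\ne i,i+1}\rho^{d(i+1,j)}(1-\rho)^{m-d(i+1,j)}P_{i+1}$; $P^i_{\{0,1\}}=\sum_{j\ne i,i+1}\rho^{d(i,j)}(1-\rho)^{m-d(i,j)}P_j$; $P^i_{\{0,-1\}}=\sum_{j\ne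 i,i+1}\rho^{d(i+1,j)}(1-\rho)^{m-d(i+1,j)}P_j$; and $P^i_{\{0,0\}}=1-\sum_{(x,y)\ne(0,0)}P^i_{\{x,y\}}$. Suppose $N_i^e(t_0)>0$ and $N_i^d(t_0)>0$ (a stable pair). Let $Q_i(N_i^e(t_0),N_i^d(t_0))$ be the probability that there exists $t>t_0$ with $N_i^e(t)=0$ or $N_i^d(t)=0$. Then $$Q_i(N_i^e(t_0),N_i^d(t_0))\le\left(\frac{P_{i+1}}{P_i}\right)^{N_i^e(t_0)}+\left(\frac{P_{i+1}^d}{P_i^d}\right)^{N_i^d(t_0)}.$$
   Context: This models a rate-1 direct shaping code with parsing length $m$ on SLC flash modeled as a binary symmetric channel with crossover probability $\rho$: i.i.d. input words $\mathbf{w}_k$ with probabilities $P_k$; $N_i^e(t)=n_i^e(t)-n_{i+1}^e(t)$ is the difference between the encoder counts of the $i$th and $(i+1)$st words and $N_i^d(t)$ the analogous difference of decoder counts; when the dictionary is stable, $P_k^d$ is the probability that the decoder outputs $\mathbf{w}_k$. The pair's evolution is modeled by the random walk in the claim. *)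

From HB Require Import structures.
From mathcomp Require Import all_boot all_order all_algebra.
From mathcomp Require Import classical_sets reals.
Set Implicit Arguments. Unset Strict Implicit. Unset Printing Implicit Defensive.
Import Order.TTheory GRing.Theory Num.Theory.
Local Open Scope ring_scope.

Definition hamming (m : nat) (u v : m.-tuple bool) : nat :=
  (\sum_(k < m) (tnth u k != tnth v k))%N.

Section Shaping.
Variables (R : realType) (m : nat) (rho : R)
  (P : 'I_(2^m) -> R) (w : 'I_(2^m) -> m.-tuple bool).

Definition bscw (k j : 'I_(2^m)) : R :=
  let d := hamming (w k) (w j) in rho ^+ d * (1 - rho) ^+ (m - d).

Definition Pdec (k : 'I_(2^m)) : R := \sum_j bscw k j * P j.

Variables (i i' : 'I_(2^m)).  (* i' is the index i+1 *)

Definition Srow (k : 'I_(2^m)) : R :=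
  \sum_(j | (j != i) && (j != i')) bscw k j.
Definition SrowP (k : 'I_(2^m)) : R :=
  \sum_(j | (j != i) && (j != i')) bscw k j * P j.

Definition trans_nz (x y : int) : R :=
  if (x == 1) && (y == 1) then (1 - rho) ^+ m * P i
  else if (x == -1) && (y == -1) then (1 - rho) ^+ m * P i'
  else if (x == 1) && (y == -1) then bscw i i' * P i
  else if (x == -1) && (y == 1) then bscw i' i * P i'
  else if (x == 1) && (y == 0) then Srow i * P i
  else if (x == -1) && (y == 0) then Srow i' * P i'
  else if (x == 0) && (y == 1) then SrowP i
  else if (x == 0) && (y == -1) then SrowP i'
  else 0.

Definition steps : seq int := [:: -1; 0; 1].

Definition trans (x y : int) : R :=
  if (x == 0) && (y == 0) then
    1 - \sum_(x' <- steps) \sum_(y' <- steps) trans_nz x' y'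
  else trans_nz x y.

(* probability that the walk started at (a,b) has a coordinate equal to 0
   at some time t in {t0+1, ..., t0+n} *)
Fixpoint hit_within (n : nat) (a b : int) : R :=
  match n with
  | 0 => 0
  | n'.+1 => \sum_(x <- steps) \sum_(y <- steps)
       trans x y * (if (a + x == 0) || (b + y == 0) then 1
                    else hit_within n' (a + x) (b + y))
  end.

(* Q_i(a,b): probability that some t > t0 has a coordinate equal to 0;
   by continuity of probability this is the supremum of the increasing
   finite-horizon hitting probabilities. *)
Definition Qhit (a b : int) : R := sup (range (fun n => hit_within n a b)).

End Shaping.

From Pilot Require Import Defs.
From HB Require Import structures.
From mathcomp Require Import all_boot all_order all_algebra.
From mathcomp Require Import classical_sets reals.
From mathcomp Require Import zify ring lra.
Set Implicit Arguments. Unset Strict Implicit. Unset Printing Implicit Defensive.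
Import Order.TTheory GRing.Theory Num.Theory.
Local Open Scope ring_scope.

(* The potential V(a, b) = r^a + s^b, with r = P_{i+1}/P_i and
   s = P^d_{i+1}/P^d_i, is harmonic for the walk inside the open quadrant:
   the encoder coordinate moves up or down with probabilities P_i and P_{i+1},
   and, the channel being doubly stochastic, the decoder coordinate moves up or
   down with probabilities P^d_i and P^d_{i+1}, so each coordinate is a
   one-dimensional walk for which r^a (resp. s^b) is harmonic.  Since V >= 1
   on the axes, induction on the horizon bounds every finite-horizon hitting
   probability by V, hence also their supremum Q_i. *)

Lemma hammingC m (u v : m.-tuple bool) : hamming u v = hamming v u.
Proof. by apply: eq_bigr => k _; rewrite eq_sym. Qed.

Lemma hammingxx m (u : m.-tuple bool) : hamming u u = 0%N.
Proof. by apply: big1 => k _; rewrite eqxx. Qed.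

Lemma hamming_card m (u v : m.-tuple bool) :
  hamming u v = #|[pred k | tnth u k != tnth v k]|.
Proof.
rewrite /hamming -sum1_card [RHS]big_mkcond /=; apply: eq_bigr => k _.
by rewrite inE; case: (tnth u k != tnth v k).
Qed.

Lemma bsc_weight_prod (R : comPzRingType) (rho : R) m (u v : m.-tuple bool) :
  rho ^+ hamming u v * (1 - rho) ^+ (m - hamming u v) =
  \prod_(k < m) (if tnth u k != tnth v k then rho else 1 - rho).
Proof.
rewrite (bigID (fun k => tnth u k != tnth v k)) /=.
rewrite (eq_bigr (fun=> rho)); last by move=> k ->.
rewrite [X in _ = _ * X](eq_bigr (fun=> 1 - rho)); last by move=> k /negbTE ->.
rewrite !prodr_const hamming_card; congr (_ * _ ^+ _).
have := cardC [pred k | tnth u k != tnth v k]; rewrite card_ord => card_split.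
by rewrite -{1}card_split addKn; apply: eq_card => k; rewrite !inE.
Qed.

Lemma sum_bsc_weight (R : comPzRingType) (rho : R) m (u : m.-tuple bool) :
  \sum_(v : m.-tuple bool) rho ^+ hamming u v * (1 - rho) ^+ (m - hamming u v)
  = 1.
Proof.
have coord_sum1 k :
    \sum_(x : bool) (if tnth u k != x then rho else 1 - rho) = 1.
  by rewrite big_bool; case: (tnth u k) => /=; rewrite ?addrNK // addrC subrK.
transitivity (\prod_(k < m) \sum_(x : bool)
    (if tnth u k != x then rho else 1 - rho)); last by rewrite big1.
rewrite bigA_distr_bigA /=.
rewrite (reindex (fun f : {ffun 'I_m -> bool} => [tuple f k | k < m])) /=.
  apply: eq_bigr => f _; rewrite bsc_weight_prod.
  by apply: eq_bigr => k _; rewrite tnth_mktuple.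
exists (fun v : m.-tuple bool => [ffun k => tnth v k]) => [f _|v _].
  by apply/ffunP => k; rewrite ffunE tnth_mktuple.
by apply: eq_from_tnth => k; rewrite tnth_mktuple ffunE.
Qed.

Lemma big_steps (R : nmodType) (F : int -> R) :
  \sum_(x <- steps) F x = F (-1) + F 0 + F 1.
Proof. by rewrite !big_cons big_nil addr0 addrA. Qed.

Lemma geometric_harmonic (R : comPzRingType) (p : int -> R) (r : R) (a : int) :
  0 < a -> \sum_(x <- steps) p x = 1 -> p 1 * r = p (-1) ->
  \sum_(x <- steps) p x * r ^+ absz (a + x) = r ^+ absz a.
Proof.
move=> a_gt0; rewrite !big_steps => p_sum1 p_ratio.
have -> : p 0 = 1 - p (-1) - p 1 by rewrite -p_sum1; ring.
have [n a_eq] : exists n, absz a = n.+1 by exists (absz a).-1; lia.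
have -> : absz (a - 1) = n by lia.
have -> : absz (a + 1) = n.+2 by lia.
by rewrite addr0 a_eq -p_ratio !exprS; ring.
Qed.

Lemma kernel_harmonic (R : comPzRingType) (T : int -> int -> R) (r s : R)
    (a b : int) :
  0 < a -> 0 < b ->
  \sum_(x <- steps) \sum_(y <- steps) T x y = 1 ->
  (\sum_(y <- steps) T 1 y) * r = \sum_(y <- steps) T (-1) y ->
  (\sum_(x <- steps) T x 1) * s = \sum_(x <- steps) T x (-1) ->
  \sum_(x <- steps) \sum_(y <- steps)
      T x y * (r ^+ absz (a + x) + s ^+ absz (b + y))
    = r ^+ absz a + s ^+ absz b.
Proof.
move=> a_gt0 b_gt0 T_sum1 r_ratio s_ratio.
under eq_bigr do rewrite (eq_bigr _ (fun y _ => mulrDr _ _ _)) big_split.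
rewrite big_split /= [X in _ + X]exchange_big /=.
congr (_ + _); under eq_bigr do rewrite -mulr_suml.
- exact: geometric_harmonic.
- by apply: geometric_harmonic; rewrite // exchange_big.
Qed.

Lemma bigD2 (R : nmodType) (I : finType) (i i' : I) (F : I -> R) : i != i' ->
  \sum_j F j = F i + F i' + \sum_(j | (j != i) && (j != i')) F j.
Proof. by move=> ii'; rewrite (bigD1 i) //= (bigD1 i') 1?eq_sym //= addrA. Qed.

Section BSCWalk.
Variables (R : realType) (m : nat) (rho : R) (P : 'I_(2^m) -> R)
  (w : 'I_(2^m) -> m.-tuple bool) (i i' : 'I_(2^m)).
Hypotheses (rho_ge0 : 0 <= rho) (rho_le1 : rho <= 1) (w_inj : injective w)
  (P_ge0 : forall k, 0 <= P k) (P_sum1 : \sum_k P k = 1) (i_neq_i' : i != i').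

Local Notation bscw := (bscw rho w).
Local Notation Pdec := (Pdec rho P w).
Local Notation SrowP := (SrowP rho P w i i').
Local Notation tr := (trans rho P w i i').

Lemma bscw_ge0 k j : 0 <= bscw k j.
Proof. by rewrite mulr_ge0 // exprn_ge0 // subr_ge0. Qed.

Lemma bscwC k j : bscw k j = bscw j k.
Proof. by rewrite /Defs.bscw hammingC. Qed.

Lemma bscwxx k : bscw k k = (1 - rho) ^+ m.
Proof. by rewrite /Defs.bscw hammingxx subn0 mul1r. Qed.

Lemma sum_bscw_row k : \sum_j bscw k j = 1.
Proof.
have w_bij : bijective w.
  by apply: inj_card_bij => //; rewrite card_tuple card_bool card_ord.
by rewrite -(sum_bsc_weight rho (w k)) [RHS](reindex w) //; exact: onW_bij.
Qed.

Lemma sum_bscw_col j : \sum_k bscw k j = 1.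
Proof. by rewrite -(sum_bscw_row j); apply: eq_bigr => k _; rewrite bscwC. Qed.

Lemma PdecE k : Pdec k = bscw k i * P i + bscw k i' * P i' + SrowP k.
Proof. exact: bigD2 _ i_neq_i'. Qed.

Lemma prob_enc_up : \sum_(y <- steps) tr 1 y = P i.
Proof.
rewrite big_steps /trans /trans_nz /=.
rewrite -[in RHS](mul1r (P i)) -[in RHS](sum_bscw_row i).
by rewrite (bigD2 _ i_neq_i') bscwxx /Srow; ring.
Qed.

Lemma prob_enc_down : \sum_(y <- steps) tr (-1) y = P i'.
Proof.
rewrite big_steps /trans /trans_nz /=.
rewrite -[in RHS](mul1r (P i')) -[in RHS](sum_bscw_row i').
by rewrite (bigD2 _ i_neq_i') bscwxx bscwC /Srow; ring.
Qed.

Lemma prob_dec_up : \sum_(x <- steps) tr x 1 = Pdec i.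
Proof. by rewrite big_steps /trans /trans_nz /= PdecE bscwxx bscwC; ring. Qed.

Lemma prob_dec_down : \sum_(x <- steps) tr x (-1) = Pdec i'.
Proof.
by rewrite big_steps /trans /trans_nz /= PdecE bscwxx (bscwC i'); ring.
Qed.

Lemma sum_trans : \sum_(x <- steps) \sum_(y <- steps) tr x y = 1.
Proof.
rewrite /trans big_steps !big_steps /=.
have -> : trans_nz rho P w i i' 0 0 = 0 by [].
ring.
Qed.

Lemma Pdec_ge0 k : 0 <= Pdec k.
Proof. by apply: sumr_ge0 => j _; rewrite mulr_ge0 ?bscw_ge0. Qed.

Lemma SrowP_pair_le : SrowP i + SrowP i' <= 1 - P i - P i'.
Proof.
rewrite -P_sum1 (bigD2 _ i_neq_i') -big_split /=.
have -> : forall x y z : R, x + y + z - x - y = z by move=> *; ring.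
apply: ler_sum => j _; rewrite -mulrDl ler_piMl //.
have := sum_bscw_col j; rewrite (bigD2 _ i_neq_i').
have : 0 <= \sum_(k | (k != i) && (k != i')) bscw k j.
  by apply: sumr_ge0 => k _; exact: bscw_ge0.
lra.
Qed.

Lemma trans_nz_ge0 x y : 0 <= trans_nz rho P w i i' x y.
Proof.
have Srow_ge0 k : 0 <= Srow rho w i i' k.
  by apply: sumr_ge0 => j _; exact: bscw_ge0.
have SrowP_ge0 k : 0 <= SrowP k.
  by apply: sumr_ge0 => j _; rewrite mulr_ge0 ?bscw_ge0.
rewrite /trans_nz -(bscwxx i).
by repeat case: ifP => _; try apply: mulr_ge0; rewrite ?bscw_ge0.
Qed.

Lemma trans_ge0 x y : 0 <= tr x y.
Proof.
have [/andP[/eqP-> /eqP->] | nz] := boolP ((x == 0) && (y == 0)); last first.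
  by rewrite /trans (negbTE nz) trans_nz_ge0.
(* The holding weight is 1 - P_i - P_{i+1} - SrowP i - SrowP i'. *)
have := sum_trans; rewrite big_steps prob_enc_down prob_enc_up big_steps.
have -> : tr 0 (-1) = SrowP i' by [].
have -> : tr 0 1 = SrowP i by [].
have := SrowP_pair_le; lra.
Qed.

Lemma hit_within_le (r s : R) n (a b : int) :
  0 <= r -> 0 <= s -> P i * r = P i' -> Pdec i * s = Pdec i' ->
  0 < a -> 0 < b ->
  hit_within rho P w i i' n a b <= r ^+ absz a + s ^+ absz b.
Proof.
move=> r_ge0 s_ge0 r_ratio s_ratio.
elim: n a b => [|n IH] a b a_gt0 b_gt0 /=; first by rewrite addr_ge0 ?exprn_ge0.
rewrite -(kernel_harmonic a_gt0 b_gt0 sum_trans);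
  rewrite ?prob_enc_up ?prob_enc_down ?prob_dec_up ?prob_dec_down //.
rewrite big_seq [leRHS]big_seq; apply: ler_sum => x x_step.
rewrite big_seq [leRHS]big_seq; apply: ler_sum => y y_step.
rewrite ler_wpM2l ?trans_ge0 //.
have ax_ge0 : 0 <= a + x by move: x_step; rewrite !inE => /or3P[] /eqP->; lia.
have by_ge0 : 0 <= b + y by move: y_step; rewrite !inE => /or3P[] /eqP->; lia.
have [-> | ax_neq0] /= := eqVneq (a + x) 0; first by rewrite lerDl exprn_ge0.
have [-> | by_neq0] /= := eqVneq (b + y) 0; first by rewrite lerDr exprn_ge0.
by apply: IH; rewrite lt_def ?ax_neq0 ?by_neq0.
Qed.

End BSCWalk.

Lemma mul_div_of_le (R : numFieldType) (x y : R) : 0 <= y -> y <= x ->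
  x * (y / x) = y.
Proof.
move=> y_ge0 y_le_x; have [x0 | x_neq0] := eqVneq x 0; last first.
  by rewrite mulrCA divff // mulr1.
by rewrite x0 mul0r; apply/eqP; rewrite eq_le y_ge0 -x0 y_le_x.
Qed.

Theorem lemma1 (R : realType) (m : nat) (rho : R)
  (P : 'I_(2^m) -> R) (w : 'I_(2^m) -> m.-tuple bool)
  (i i' : 'I_(2^m)) (a b : nat) :
  (1 <= m)%N ->
  0 <= rho -> rho < 1 / 2 ->
  injective w ->
  (forall k, 0 <= P k) -> \sum_k P k = 1 ->
  (forall k l : 'I_(2^m), (k <= l)%N -> P l <= P k) ->
  (forall k l : 'I_(2^m), (k <= l)%N -> Pdec rho P w l <= Pdec rho P w k) ->
  val i' = (val i).+1 ->
  (0 < a)%N -> (0 < b)%N ->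
  Qhit rho P w i i' a%:Z b%:Z <=
    (P i' / P i) ^+ a + (Pdec rho P w i' / Pdec rho P w i) ^+ b.
Proof.
move=> _ rho_ge0 rho_lt_half w_inj P_ge0 P_sum1 P_sorted Pdec_sorted i'E.
move=> a_gt0 b_gt0.
have rho_le1 : rho <= 1 by lra.
have i_le_i' : (i <= i')%N by rewrite i'E.
have i_neq_i' : i != i' by rewrite -val_eqE i'E (ltn_eqF (ltnSn _)).
have Pdec_ge0 := Pdec_ge0 w rho_ge0 rho_le1 P_ge0.
apply: ge_sup; first by exists (hit_within rho P w i i' 0 a b), 0%N.
move=> _ [n _ <-].
apply: hit_within_le; rewrite ?ltz_nat ?divr_ge0 //.
- exact: mul_div_of_le (P_ge0 i') (P_sorted _ _ i_le_i').
- exact: mul_div_of_le (Pdec_ge0 i') (Pdec_sorted _ _ i_le_i').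
Qed.
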